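(* Consider 35 labels arranged in the left-to-right order $g_0,g_1,r_0,r_1,b_0,b_1,g_2,g_3,g_4,m_0,m_1,g_5,g_6,m_2,m_3,m_4,b_2,b_3,b_4,r_2,r_3,r_4,y_0,y_1,r_5,r_6,y_2,y_3,y_4,b_5,b_6,m_5,m_6,y_5,y_6$, and assign to them any 35 real numbers (their $x$-coordinates) that are strictly increasing in this order. For a color $c\in\{g,r,b,m,y\}$ and $0\le i<j\le 6$, let $d^c_{i,j}$ denote the absolute difference of the $x$-coordinates of $c_i$ and $c_j$. Then there is at least one color $c\in\{g,r,b,m,y\}$ such that $$d^c_{0,1}d^c_{2,3}d^c_{3,4}d^c_{5,6}>d^c_{1,2}d^c_{4,5}d^c_{0,3}d^c_{3,6}$$ does not hold. *)

From Stdlib Require Import Reals List.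
Open Scope R_scope.

Inductive color := cg | cr | cb | cm | cy.

(* The left-to-right order of the 35 labels
   g0 g1 r0 r1 b0 b1 g2 g3 g4 m0 m1 g5 g6 m2 m3 m4 b2 b3 b4 r2 r3 r4
   y0 y1 r5 r6 y2 y3 y4 b5 b6 m5 m6 y5 y6
   is encoded by positions 0..34; [label_pos c i] is the position of c_i. *)
Definition color_positions (c : color) : list nat :=
  match c with
  | cg => 0 :: 1 :: 6 :: 7 :: 8 :: 11 :: 12 :: nil
  | cr => 2 :: 3 :: 19 :: 20 :: 21 :: 24 :: 25 :: nil
  | cb => 4 :: 5 :: 16 :: 17 :: 18 :: 29 :: 30 :: nil
  | cm => 9 :: 10 :: 13 :: 14 :: 15 :: 31 :: 32 :: nil
  | cy => 22 :: 23 :: 26 :: 27 :: 28 :: 33 :: 34 :: nil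
  end%nat.

Definition label_pos (c : color) (i : nat) : nat := nth i (color_positions c) 0%nat.

Definition dist (x : nat -> R) (c : color) (i j : nat) : R :=
  Rabs (x (label_pos c i) - x (label_pos c j)).

Definition ineq (x : nat -> R) (c : color) : Prop :=
  dist x c 0 1 * dist x c 2 3 * dist x c 3 4 * dist x c 5 6 >
  dist x c 1 2 * dist x c 4 5 * dist x c 0 3 * dist x c 3 6.

(* If every color satisfied the inequality, then, since d01 and d23 are at most
   d03 and d34 and d56 are at most d36, each color would give
   d12 d45 < n1 n2 for any n1 in {d01, d23} and n2 in {d34, d56}.  Bounding
   d12 and d45 below by single gaps between consecutive labels lying inside
   them, every color yields an inequality u u' < v v' between products of two
   consecutive gaps, and these five inequalities can be chosen so that the ten
   gaps on the left are exactly the ten gaps on the right.  Multiplying them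
   gives P < P. *)

From Pilot Require Import Defs.
From Stdlib Require Import Reals List Lra Lia Classical.
Open Scope R_scope.

Definition gap (x : nat -> R) (k : nat) : R := x (S k) - x k.

Section IncreasingSequence.

Variables (n : nat) (x : nat -> R).
Hypothesis x_incr : forall k, (k < n)%nat -> x k < x (S k).

Lemma gap_pos k : (k < n)%nat -> 0 < gap x k.
Proof. intro Hk; unfold gap; specialize (x_incr k Hk); lra. Qed.

Lemma increasing_le i j : (i <= j <= n)%nat -> x i <= x j.
Proof.
  intros [Hij Hjn]; induction Hij as [|j Hij IH]; [lra|].
  apply Rle_trans with (x j); [apply IH; lia | left; apply x_incr; lia].
Qed.

Lemma increasing_lt i j : (i < j <= n)%nat -> x i < x j.
Proof.
  intros [Hij Hjn].
  apply Rle_lt_trans with (x (pred j)); [apply increasing_le; lia|].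
  replace j with (S (pred j)) at 2 by lia; apply x_incr; lia.
Qed.

Lemma gap_le_diff i j k : (i <= k)%nat -> (k < j <= n)%nat -> gap x k <= x j - x i.
Proof.
  intros Hik Hkj; unfold gap.
  assert (x i <= x k) by (apply increasing_le; lia).
  assert (x (S k) <= x j) by (apply increasing_le; lia).
  lra.
Qed.

End IncreasingSequence.

Lemma Rmult_lt_of_cross_bound (a b c e f h S T : R) :
  0 < a <= S -> 0 < e <= T -> 0 <= b * f ->
  b * f * S * T < a * c * e * h -> b * f < c * h.
Proof.
  intros Ha He Hbf Hlt.
  assert (Hae : b * f * (a * e) <= b * f * (S * T)).
  { apply Rmult_le_compat_l; [lra|]; apply Rmult_le_compat; lra. }
  apply Rmult_lt_reg_l with (a * e); [nra | lra].
Qed.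

Lemma seven_points_gap_bound (p0 p1 p2 p3 p4 p5 p6 n1 n2 : R) :
  p0 < p1 -> p1 < p2 -> p2 < p3 -> p3 < p4 -> p4 < p5 -> p5 < p6 ->
  (p1 - p0) * (p3 - p2) * (p4 - p3) * (p6 - p5) >
  (p2 - p1) * (p5 - p4) * (p3 - p0) * (p6 - p3) ->
  (n1 = p1 - p0 \/ n1 = p3 - p2) -> (n2 = p4 - p3 \/ n2 = p6 - p5) ->
  (p2 - p1) * (p5 - p4) < n1 * n2.
Proof.
  intros H01 H12 H23 H34 H45 H56 Hineq Hn1 Hn2.
  assert (Hbf : 0 <= (p2 - p1) * (p5 - p4)) by nra.
  destruct Hn1 as [-> | ->], Hn2 as [-> | ->].
  - apply (Rmult_lt_of_cross_bound (p3 - p2) _ _ (p6 - p5) _ _ (p3 - p0) (p6 - p3)); lra.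
  - apply (Rmult_lt_of_cross_bound (p3 - p2) _ _ (p4 - p3) _ _ (p3 - p0) (p6 - p3)); lra.
  - apply (Rmult_lt_of_cross_bound (p1 - p0) _ _ (p6 - p5) _ _ (p3 - p0) (p6 - p3)); lra.
  - apply (Rmult_lt_of_cross_bound (p1 - p0) _ _ (p4 - p3) _ _ (p3 - p0) (p6 - p3)); lra.
Qed.

Lemma label_pos_lt_succ c i : (i < 6)%nat -> (label_pos c i < label_pos c (S i))%nat.
Proof. intro Hi; destruct c; do 6 (destruct i; [cbn; lia|]); lia. Qed.

Lemma label_pos_le c i : (label_pos c i <= 34)%nat.
Proof. destruct c; do 7 (destruct i; [cbn; lia|]); unfold label_pos; cbn; destruct i; lia. Qed.

Definition gap_witness (c : color) (L1 L2 N1 N2 : nat) : Prop :=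
  (label_pos c 1 <= L1 < label_pos c 2)%nat /\
  (label_pos c 4 <= L2 < label_pos c 5)%nat /\
  (label_pos c 0 = N1 /\ label_pos c 1 = S N1 \/ label_pos c 2 = N1 /\ label_pos c 3 = S N1) /\
  (label_pos c 3 = N2 /\ label_pos c 4 = S N2 \/ label_pos c 5 = N2 /\ label_pos c 6 = S N2).

Lemma ineq_gap_witness_lt (x : nat -> R) (c : color) (L1 L2 N1 N2 : nat) :
  (forall k, (k < 34)%nat -> x k < x (S k)) ->
  ineq x c -> gap_witness c L1 L2 N1 N2 ->
  0 < gap x L1 * gap x L2 < gap x N1 * gap x N2.
Proof.
  intros hx Hineq (HL1 & HL2 & HN1 & HN2).
  assert (Hlab : forall k, (k < 6)%nat -> (label_pos c k < label_pos c (S k) <= 34)%nat)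
    by (intros; split; [apply label_pos_lt_succ | apply label_pos_le]; lia).
  assert (Hp : forall k, (k < 6)%nat -> x (label_pos c k) < x (label_pos c (S k)))
    by (intros k Hk; apply (increasing_lt 34 x hx), Hlab, Hk).
  assert (Hdist : forall k l, (k < l <= 6)%nat ->
                    Defs.dist x c k l = x (label_pos c l) - x (label_pos c k)).
  { intros k l Hkl; unfold Defs.dist; rewrite Rabs_left; [ring|].
    pose proof (increasing_lt 6 (fun k => x (label_pos c k)) Hp k l Hkl); lra. }
  unfold ineq in Hineq; rewrite !Hdist in Hineq by lia.
  assert (Hbound : (x (label_pos c 2) - x (label_pos c 1)) * (x (label_pos c 5) - x (label_pos c 4))
                   < gap x N1 * gap x N2).
  { apply (seven_points_gap_bound (x (label_pos c 0)) (x (label_pos c 1)) (x (label_pos c 2))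
             (x (label_pos c 3)) (x (label_pos c 4)) (x (label_pos c 5)) (x (label_pos c 6)));
      try (apply Hp; lia); [exact Hineq | |]; unfold gap.
    - destruct HN1 as [[<- ->] | [<- ->]]; tauto.
    - destruct HN2 as [[<- ->] | [<- ->]]; tauto. }
  pose proof (Hlab 1%nat) as H12; pose proof (Hlab 4%nat) as H45.
  assert (G1 := gap_pos 34 x hx L1 ltac:(lia)).
  assert (G2 := gap_pos 34 x hx L2 ltac:(lia)).
  assert (B1 := gap_le_diff 34 x hx (label_pos c 1) (label_pos c 2) L1 ltac:(lia) ltac:(lia)).
  assert (B2 := gap_le_diff 34 x hx (label_pos c 4) (label_pos c 5) L2 ltac:(lia) ltac:(lia)).
  split; [nra|].
  eapply Rle_lt_trans; [|exact Hbound].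
  apply Rmult_le_compat; lra.
Qed.

Lemma Rmult_pos_lt_compat (a b c d : R) : 0 < a < b -> 0 < c < d -> 0 < a * c < b * d.
Proof. intros Hab Hcd; split; [nra | apply Rmult_le_0_lt_compat; lra]. Qed.

Ltac solve_witness := unfold gap_witness, label_pos; cbn; lia.

Theorem lemma4 (x : nat -> R)
  (hx : forall k : nat, (k < 34)%nat -> x k < x (S k)) :
  exists c : color, ~ ineq x c.
Proof.
  apply not_all_not_ex; intro all_hold.
  (* Each of the gaps 2, 6, 9, 11, 14, 16, 22, 24, 27, 29 occurs once on each side. *)
  pose proof (ineq_gap_witness_lt x cg 2 9 6 11 hx (NNPP _ (all_hold cg)) ltac:(solve_witness)) as Hg.
  pose proof (ineq_gap_witness_lt x cr 14 22 2 24 hx (NNPP _ (all_hold cr)) ltac:(solve_witness)) as Hr.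
  pose proof (ineq_gap_witness_lt x cb 6 27 16 29 hx (NNPP _ (all_hold cb)) ltac:(solve_witness)) as Hb.
  pose proof (ineq_gap_witness_lt x cm 11 16 9 14 hx (NNPP _ (all_hold cm)) ltac:(solve_witness)) as Hm.
  pose proof (ineq_gap_witness_lt x cy 24 29 22 27 hx (NNPP _ (all_hold cy)) ltac:(solve_witness)) as Hy.
  pose proof (Rmult_pos_lt_compat _ _ _ _ Hg
               (Rmult_pos_lt_compat _ _ _ _ Hr
                 (Rmult_pos_lt_compat _ _ _ _ Hb (Rmult_pos_lt_compat _ _ _ _ Hm Hy)))).
  lra.
Qed.
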